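(* Let $D$ be a friendship digraph. Then $D$ is a fancy wheel digraph or a regular digraph. Moreover, if $D$ is a regular digraph, then $D$ has $k^2-k+1$ vertices for some integer $k\geq 2$, where $k$ is the outdegree of each vertex of $D$.
   Context: All digraphs are finite and have neither loops nor parallel arcs (a pair of opposite arcs $(u,v)$ and $(v,u)$ is allowed). For a vertex $v$, $N^+(v)$ and $N^-(v)$ denote the sets of out-neighbors and in-neighbors of $v$. A friendship digraph is a nontrivial digraph (at least two vertices) in which any two distinct vertices have exactly one common out-neighbor. A fancy wheel digraph is a digraph $D$ such that (W1) $D$ has exactly one vertex $v$ with $N^+(v)=N^-(v)=V(D)-\{v\}$, and (W2) $D-v$ is a vertex-disjoint union of directed cycles. For a positive integer $k$, a $k$-regular digraph is one in which every vertex has outdegree $k$ and indegree $k$; a digraph is regular if it is $k$-regular for some positive integer $k$. *)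

From mathcomp Require Import all_boot.
Set Implicit Arguments. Unset Strict Implicit. Unset Printing Implicit Defensive.

(* A digraph on the finite vertex type V is a loopless arc relation
   (pairs of opposite arcs allowed, no parallel arcs by construction). *)
Definition loopless (V : finType) (arc : rel V) : Prop := forall v, ~~ arc v v.

Definition outN (V : finType) (arc : rel V) (v : V) : {set V} := [set w | arc v w].
Definition inN (V : finType) (arc : rel V) (v : V) : {set V} := [set w | arc w v].

Definition friendship (V : finType) (arc : rel V) : Prop :=
  1 < #|V| /\
  forall u v : V, u != v -> #|outN arc u :&: outN arc v| = 1.

(* The digraph induced on the vertex set S is a vertex-disjoint union of
   directed cycles: there is a fixed-point-free permutation f of S
   (its cycles are the directed cycles) such that the arcs inside S are
   exactly the pairs (x, f x). *)
Definition union_of_dicycles (V : finType) (arc : rel V) (S : {set V}) : Prop :=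
  exists f : V -> V,
    [/\ {in S, forall x, f x \in S},
        {in S &, injective f},
        {in S, forall x, f x != x} &
        {in S &, forall x y, arc x y = (y == f x)}].

Definition fancy_wheel (V : finType) (arc : rel V) : Prop :=
  exists v : V,
    [/\ outN arc v = [set~ v], inN arc v = [set~ v],
        (forall w : V, outN arc w = [set~ w] -> inN arc w = [set~ w] -> w = v) &
        union_of_dicycles arc [set~ v]].

Definition k_regular (V : finType) (arc : rel V) (k : nat) : Prop :=
  forall v : V, #|outN arc v| = k /\ #|inN arc v| = k.

Definition regular (V : finType) (arc : rel V) : Prop :=
  exists k, 0 < k /\ k_regular arc k.

From mathcomp Require Import all_boot zify.

Set Implicit Arguments. Unset Strict Implicit. Unset Printing Implicit Defensive.

(* If u has no arc to w, sending an in-neighbour x of w to the common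
   out-neighbour of u and x is injective, so indeg w <= outdeg u.  Taking u = w
   and double counting arcs gives indeg = outdeg everywhere; double counting
   non-arcs then gives outdeg u = outdeg w whenever u has no arc to w.  Hence
   vertices of different outdegrees are joined both ways.  Two vertices of one
   outdegree have every vertex of another outdegree as a common out-neighbour,
   so either all outdegrees agree, or one vertex v has an outdegree shared by
   nobody else.  In the first case, counting the pairs (x, w) with w the common
   out-neighbour of a fixed u and of x gives n - 1 = k (k - 1).  In the second,
   v is joined both ways to everybody, and the other arcs form a fixed-point-free
   permutation: the successor of x is the common out-neighbour of v and x. *)

Lemma leq_sum_eq (I : finType) (P : pred I) (E1 E2 : I -> nat) :
    (forall i, P i -> E1 i <= E2 i) ->
  \sum_(i | P i) E1 i = \sum_(i | P i) E2 i -> forall i, P i -> E1 i = E2 i.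
Proof.
move=> le12 /eqP; rewrite (leqif_sum (fun i Pi => leqif_eq (le12 i Pi))).2.
by move=> /forall_inP eq12 i /eq12 /eqP.
Qed.

Lemma sum_rel_fst (T : finType) (r : rel T) (f : T -> nat) :
  \sum_(p | r p.1 p.2) f p.1 = \sum_x #|[set y | r x y]| * f x.
Proof.
rewrite -(pair_big_dep predT r (fun x _ => f x)) /=.
by apply: eq_bigr => x _; rewrite sum_nat_cond_const.
Qed.

Lemma sum_rel_snd (T : finType) (r : rel T) (f : T -> nat) :
  \sum_(p | r p.1 p.2) f p.2 = \sum_y #|[set x | r x y]| * f y.
Proof.
rewrite -(sum_rel_fst (fun y x => r x y)).
rewrite (reindex_inj (h := fun p : T * T => (p.2, p.1))) //=.
by case=> [? ?] [? ?] [-> ->].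
Qed.

Lemma sum_card_rel (T : finType) (r : rel T) :
  \sum_x #|[set y | r x y]| = \sum_y #|[set x | r x y]|.
Proof.
have /= := sum_rel_fst r (fun=> 1); have /= := sum_rel_snd r (fun=> 1).
move=> E2 E1; under eq_bigr do rewrite -[#|_|]muln1.
by under [RHS]eq_bigr do rewrite -[#|_|]muln1; rewrite -E1 -E2.
Qed.

Section FriendshipDigraph.

Variables (V : finType) (arc : rel V).
Hypotheses (arc_irr : loopless arc) (arc_friend : friendship arc).

(* A junk value unless [x != y]. *)
Definition common_out (x y : V) : V := odflt x [pick z in outN arc x :&: outN arc y].

Lemma common_outP x y : x != y -> common_out x y \in outN arc x :&: outN arc y.
Proof.
move=> xy; rewrite /common_out; case: pickP => //= none.
by have := arc_friend.2 x y xy; rewrite (eq_card0 none).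
Qed.

Lemma common_out_uniq x y z :
  x != y -> z \in outN arc x :&: outN arc y -> z = common_out x y.
Proof.
move=> xy zxy; have /card_le1_eqP le1 : #|outN arc x :&: outN arc y| <= 1.
  by rewrite arc_friend.2.
exact: le1 (common_outP xy) zxy.
Qed.

Lemma leq_card_inN_outN u w : ~~ arc u w -> #|inN arc w| <= #|outN arc u|.
Proof.
move=> nuw.
have u_neq x : x \in inN arc w -> u != x.
  by rewrite inE; apply: contraTneq => <-.
have inj : {in inN arc w &, injective (common_out u)}.
  move=> x y xw yw cxy; apply: contraNeq nuw => xy.
  have /setIP[uc xc] := common_outP (u_neq x xw).
  have /setIP[_ yc] := common_outP (u_neq y yw).
  have wxy : w \in outN arc x :&: outN arc y by move: xw yw; rewrite !inE => -> ->.
  rewrite cxy in xc uc; have cxy' : common_out u y \in outN arc x :&: outN arc y.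
    by rewrite inE xc.
  by move: uc; rewrite (common_out_uniq xy cxy') -(common_out_uniq xy wxy) inE.
rewrite -(card_in_imset inj); apply/subset_leq_card/subsetP => _ /imsetP[x xw ->].
by have /setIP[] := common_outP (u_neq x xw).
Qed.

Lemma card_inN_outN w : #|inN arc w| = #|outN arc w|.
Proof.
apply: (@leq_sum_eq _ predT (fun w => #|inN arc w|) (fun w => #|outN arc w|)) => //.
  by move=> {}w _; apply: leq_card_inN_outN.
by rewrite /inN /outN sum_card_rel.
Qed.

Lemma eq_card_outN_nonarc u w : ~~ arc u w -> #|outN arc u| = #|outN arc w|.
Proof.
pose d x := #|outN arc x|.
have card_nonarc_out x : #|[set y | ~~ arc x y]| = #|V| - d x.
  by rewrite -(cardsC (outN arc x)) addKn; apply: eq_card => y; rewrite !inE.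
have card_nonarc_in y : #|[set x | ~~ arc x y]| = #|V| - d y.
  rewrite /d -card_inN_outN -(cardsC (inN arc y)) addKn.
  by apply: eq_card => x; rewrite !inE.
have sums : \sum_(p | ~~ arc p.1 p.2) d p.2 = \sum_(p | ~~ arc p.1 p.2) d p.1.
  rewrite (sum_rel_snd (fun x y => ~~ arc x y)) (sum_rel_fst (fun x y => ~~ arc x y)).
  under eq_bigr do rewrite card_nonarc_in.
  by under [RHS]eq_bigr do rewrite card_nonarc_out.
move=> nuw; symmetry; apply: (leq_sum_eq _ sums (i := (u, w))) => // -[x y] /=.
by rewrite /d -card_inN_outN; apply: leq_card_inN_outN.
Qed.

Lemma arc_card_outN_neq x y : #|outN arc x| != #|outN arc y| -> arc x y.
Proof. by apply: contraR => /eq_card_outN_nonarc ->. Qed.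

Lemma card_outN_neq_uniq a a' x y :
    a != a' -> #|outN arc a| = #|outN arc a'| ->
  #|outN arc x| != #|outN arc a| -> #|outN arc y| != #|outN arc a| -> x = y.
Proof.
move=> aa' da' dx dy.
have common z : #|outN arc z| != #|outN arc a| -> z \in outN arc a :&: outN arc a'.
  by move=> dz; rewrite !inE !arc_card_outN_neq // -?da' eq_sym.
have := common_out_uniq aa' (common x dx); have := common_out_uniq aa' (common y dy).
by move=> -> ->.
Qed.

Lemma card_outN_const_or_unique :
  (forall x y, #|outN arc x| = #|outN arc y|) \/
  exists v, forall x, x != v -> #|outN arc x| != #|outN arc v|.
Proof.
have [/forallP const|] := boolP [forall x, forall y, #|outN arc x| == #|outN arc y|].
  by left=> x y; apply/eqP/(forallP (const x)).
move=> /forallPn[a /forallPn[b dab]]; right.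
case: (pickP (fun a' => (a' != a) && (#|outN arc a'| == #|outN arc a|))).
  move=> a' /andP[a'a /eqP da']; exists b => x; apply: contra_neq => dxb.
  by apply: (card_outN_neq_uniq a'a da'); rewrite ?dxb da' eq_sym.
move=> uniq_a; exists a => x xa.
by move: (uniq_a x); rewrite xa => /= ->.
Qed.

Lemma union_of_dicycles_universal v :
  outN arc v = [set~ v] -> inN arc v = [set~ v] -> union_of_dicycles arc [set~ v].
Proof.
move=> outv inv.
have arc_to_v z : z \in [set~ v] -> arc z v by rewrite -inv inE.
have succP x : x \in [set~ v] -> common_out v x \in [set~ v] /\ arc x (common_out v x).
  rewrite !inE eq_sym => vx; have /setIP[] := common_outP vx.
  by rewrite outv !inE => -> ->.
exists (common_out v); split.
- by move=> x /succP[].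
- move=> x y xv yv cxy; apply/eqP/negPn/negP => xy.
  have vxy : v \in outN arc x :&: outN arc y by rewrite !inE !arc_to_v.
  have [cv cx] := succP x xv; have [_ cy] := succP y yv.
  have cxy' : common_out v x \in outN arc x :&: outN arc y by rewrite !inE cx cxy.
  by move: cv; rewrite (common_out_uniq xy cxy') -(common_out_uniq xy vxy) !inE eqxx.
- move=> x /succP[_]; apply: contraTneq => ->; exact: arc_irr.
- move=> x y xv yv; apply/idP/eqP => [xy|->]; last by case: (succP x xv).
  apply: common_out_uniq; first by rewrite !inE eq_sym in xv.
  by rewrite inE outv yv inE.
Qed.

Lemma fancy_wheel_unique_card_outN v :
  (forall x, x != v -> #|outN arc x| != #|outN arc v|) -> fancy_wheel arc.
Proof.
move=> vD.
have [outv inv] : outN arc v = [set~ v] /\ inN arc v = [set~ v].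
  split; apply/setP => x; rewrite !inE; have [->|xv] /= := eqVneq x v.
  - exact: negbTE (arc_irr v).
  - by apply: arc_card_outN_neq; rewrite eq_sym vD.
  - exact: negbTE (arc_irr v).
  - exact/arc_card_outN_neq/vD.
exists v; split=> //; last exact: union_of_dicycles_universal.
move=> w outw _; apply/eqP/negPn/negP => /vD.
by rewrite outw outv !cardsC1 eqxx.
Qed.

Lemma regular_const_card_outN :
  (forall x y, #|outN arc x| = #|outN arc y|) -> regular arc.
Proof.
move=> const; have [a [b [_ _ ab]]] := card_gt1P arc_friend.1.
exists #|outN arc a|; split.
  by apply/card_gt0P; exists (common_out a b); have /setIP[] := common_outP ab.
by move=> v; rewrite card_inN_outN (const v a).
Qed.

Lemma card_pred_sum_inN u : #|V|.-1 = \sum_(w in outN arc u) #|inN arc w :\ u|.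
Proof.
pose r x w := [&& x != u, arc u w & arc x w].
have card_r_out x : #|[set w | r x w]| = (x != u).
  have [->|xu] := eqVneq x u; first by apply: eq_card0 => w; rewrite /r !inE eqxx.
  rewrite /= -(arc_friend.2 u x) 1?eq_sym //.
  by apply: eq_card => w; rewrite /r !inE xu.
have card_r_in w : #|[set x | r x w]| = if w \in outN arc u then #|inN arc w :\ u| else 0.
  rewrite /r inE; case: (arc u w).
  - by apply: eq_card => x; rewrite !inE.
  - by apply: eq_card0 => x; rewrite !inE andbF.
have := sum_card_rel r.
under eq_bigr do rewrite card_r_out; under [RHS]eq_bigr do rewrite card_r_in.
move=> sums; rewrite big_mkcond -sums (bigD1 u) //= eqxx add0n -(cardC1 u).
by rewrite -sum1_card; apply: eq_big => // x /negbTE ->.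
Qed.

Lemma card_k_regular k : k_regular arc k -> 2 <= k /\ #|V| = k ^ 2 - k + 1.
Proof.
move=> reg; have [a _] := card_gt0P (ltnW arc_friend.1).
have card_inN_a w : w \in outN arc a -> #|inN arc w :\ a| = k.-1.
  move=> aw; have a_w : a \in inN arc w by move: aw; rewrite !inE.
  by have := (reg w).2; rewrite (cardsD1 a) a_w add1n => <-.
have := card_pred_sum_inN a; rewrite (eq_bigr _ card_inN_a) sum_nat_const (reg a).1.
by have := arc_friend.1; lia.
Qed.

End FriendshipDigraph.

Theorem theorem1p1 (V : finType) (arc : rel V) :
  loopless arc -> friendship arc ->
  (fancy_wheel arc \/ regular arc) /\
  (forall k, 0 < k -> k_regular arc k -> 2 <= k /\ #|V| = k ^ 2 - k + 1).
Proof.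
move=> irr friend; split; last by move=> k _; apply: card_k_regular.
have [const | [v vD]] := card_outN_const_or_unique irr friend.
- by right; apply: regular_const_card_outN.
- by left; apply: fancy_wheel_unique_card_outN vD.
Qed.
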